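(* Let $H$ be a complex Hilbert space and let $T\in B(H)$ be written as $T=A+iB$ with $A=\frac{T+T^*}{2}$ and $B=\frac{T-T^*}{2i}$ (both self-adjoint). Let $n\geq 2$ be an integer. If $T^n=0$ and either $A\geq 0$ or $B\geq 0$, then $T=0$.
   Context: $B(H)$ denotes the algebra of all bounded linear operators from $H$ to $H$. An operator $S\in B(H)$ is positive, written $S\geq 0$, if $\langle Sx,x\rangle\geq 0$ for all $x\in H$. *)

From HB Require Import structures.
From mathcomp Require Import all_boot all_order all_algebra.
From mathcomp Require Import complex.
From mathcomp Require Import reals.
Set Implicit Arguments. Unset Strict Implicit. Unset Printing Implicit Defensive.
Import Order.TTheory GRing.Theory Num.Theory.
Local Open Scope ring_scope.
Local Open Scope complex_scope.

Definition is_inner_product (R : realType) (H : lmodType R[i])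
    (ip : H -> H -> R[i]) : Prop :=
  [/\ (forall (a : R[i]) (x y z : H), ip (a *: x + y) z = a * ip x z + ip y z),
      (forall x y : H, ip x y = (ip y x)^*),
      (forall x : H, 0 <= ip x x) &
      (forall x : H, ip x x = 0 -> x = 0)].

Definition ipnorm (R : realType) (H : lmodType R[i]) (ip : H -> H -> R[i])
    (x : H) : R := Num.sqrt (complex.Re (ip x x)).

Definition ip_complete (R : realType) (H : lmodType R[i])
    (ip : H -> H -> R[i]) : Prop :=
  forall u : nat -> H,
    (forall e : R, 0 < e -> exists N : nat, forall m n : nat,
        (N <= m)%N -> (N <= n)%N -> ipnorm ip (u m - u n) < e) ->
    exists l : H, forall e : R, 0 < e -> exists N : nat, forall n : nat,
        (N <= n)%N -> ipnorm ip (u n - l) < e.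

Definition is_hilbert (R : realType) (H : lmodType R[i])
    (ip : H -> H -> R[i]) : Prop :=
  is_inner_product ip /\ ip_complete ip.

Definition bounded_op (R : realType) (H : lmodType R[i])
    (ip : H -> H -> R[i]) (T : H -> H) : Prop :=
  linear T /\ exists M : R, forall x : H, ipnorm ip (T x) <= M * ipnorm ip x.

Definition is_adjoint (R : realType) (H : lmodType R[i])
    (ip : H -> H -> R[i]) (T Ts : H -> H) : Prop :=
  forall x y : H, ip (T x) y = ip x (Ts y).

(* S >= 0 : <S x, x> >= 0 for all x (order of R[i]: real and nonnegative). *)
Definition positive_op (R : realType) (H : lmodType R[i])
    (ip : H -> H -> R[i]) (Sop : H -> H) : Prop :=
  forall x : H, 0 <= ip (Sop x) x.

Definition re_part (R : realType) (H : lmodType R[i]) (T Ts : H -> H) : H -> H :=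
  fun x => (2%:R)^-1 *: (T x + Ts x).
Definition im_part (R : realType) (H : lmodType R[i]) (T Ts : H -> H) : H -> H :=
  fun x => (2%:R * 'i)^-1 *: (T x - Ts x).

From HB Require Import structures.
From mathcomp Require Import all_boot all_order all_algebra.
From mathcomp Require Import complex.
From mathcomp Require Import reals.
From mathcomp Require Import ring lra.
Set Implicit Arguments. Unset Strict Implicit. Unset Printing Implicit Defensive.
Import Order.TTheory GRing.Theory Num.Theory.
Local Open Scope ring_scope.
Local Open Scope complex_scope.

(* If c T is accretive for some c <> 0 (c = 1 when A >= 0, c = -i when B >= 0)
   and T x = 0, then for every complex t
     Re (c <T (t y + x), t y + x>) = Re (t c <T y, x>) + |t|^2 Re (c <T y, y>) >= 0,
   which forces <T y, x> = 0: the kernel of T is orthogonal to its range.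
   Hence ker T and ran T meet only in 0, and T^(k+1) = 0 implies T^k = 0, since
   T^k z lies in both. *)

Lemma Re_quadratic_ge0_lin_eq0 (R : rcfType) (w k : R[i]) :
  (forall t : R[i], 0 <= complex.Re (t * w + t * t^* * k)) -> w = 0.
Proof.
case: w k => a b [u v] Hge0.
(* Test with t = - s w^*, where s := 1 / (1 + (Re k)^2) ensures s Re k < 1. *)
pose s : R := (1 + u ^+ 2)^-1.
have u2_gt0 : 0 < 1 + u ^+ 2 by rewrite ltr_pwDl ?sqr_ge0.
have s_gt0 : 0 < s by rewrite invr_gt0.
have su_lt1 : s * u < 1.
  by rewrite -(ltr_pM2l u2_gt0) mulrA divff ?gt_eqF // mul1r mulr1; nra.
have := Hge0 ((- (s * a)) +i* (s * b)); simpc => /=.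
have -> : - (s * a * a) - s * b * b + ((s * a * (s * a) + s * b * (s * b)) * u -
    (s * a * (s * b) - s * b * (s * a)) * v) =
    s * ((a ^+ 2 + b ^+ 2) * (s * u - 1)) by ring.
rewrite pmulr_rge0 // => Hab.
have /eqP : a ^+ 2 + b ^+ 2 = 0 by nra.
by rewrite paddr_eq0 ?sqr_ge0 // !sqrf_eq0 => /andP[/eqP-> /eqP->].
Qed.

Section InnerProduct.
Variables (R : realType) (H : lmodType R[i]) (ip : H -> H -> R[i]).
Hypothesis ip_inner : is_inner_product ip.

Lemma ip0l z : ip 0 z = 0.
Proof.
case: ip_inner => ipZDl _ _ _.
have := ipZDl 1 0 0 z; rewrite scaler0 addr0 mul1r.
by move/(congr1 (fun t => t - ip 0 z)); rewrite subrr addrK => <-.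
Qed.

Lemma ipDl x y z : ip (x + y) z = ip x z + ip y z.
Proof. by case: ip_inner => ipZDl _ _ _; rewrite -{1}[x]scale1r ipZDl mul1r. Qed.

Lemma ipZl a x z : ip (a *: x) z = a * ip x z.
Proof. by case: ip_inner => ipZDl _ _ _; rewrite -[a *: x]addr0 ipZDl ip0l addr0. Qed.

Lemma ipZDr a x y z : ip x (a *: y + z) = a^* * ip x y + ip x z.
Proof.
case: ip_inner => ipZDl ipJ _ _.
by rewrite ipJ ipZDl rmorphD rmorphM /= -!ipJ.
Qed.

Definition accretive (S : H -> H) : Prop :=
  forall x, 0 <= complex.Re (ip (S x) x).

Lemma re_part_ge0_accretive (T Ts : H -> H) :
  is_adjoint ip T Ts -> positive_op ip (re_part T Ts) -> accretive T.
Proof.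
case: ip_inner => _ ipJ _ _ adj A_ge0 x.
have := A_ge0 x; rewrite /re_part ipZl ipDl [ip (Ts x) x]ipJ -adj addcJ.
by rewrite mulrA mulVf ?pnatr_eq0 // mul1r ler0c.
Qed.

Lemma im_part_ge0_accretive (T Ts : H -> H) :
  is_adjoint ip T Ts -> positive_op ip (im_part T Ts) -> accretive (- 'i \*: T).
Proof.
case: ip_inner => _ ipJ _ _ adj B_ge0 x.
have := B_ge0 x; rewrite /im_part ipZl ipDl -scaleN1r ipZl [ip (Ts x) x]ipJ -adj.
rewrite /= ipZl; case: (ip (T x) x) => a b; simpc.
rewrite /= expr0n add0r pmulr_rge0 ?divr_gt0 ?exprn_gt0 ?addr_gt0 // => h; lra.
Qed.

Lemma accretive_ker_orthogonal_range (c : R[i]) (T : H -> H) x :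
  linear T -> c != 0 -> accretive (c \*: T) -> T x = 0 ->
  forall y, ip (T y) x = 0.
Proof.
move=> T_lin c_neq0 cT_acc Tx0 y.
have quad_ge0 (t : R[i]) :
    0 <= complex.Re (t * (c * ip (T y) x) + t * t^* * (c * ip (T y) y)).
  have := cT_acc (t *: y + x); rewrite /= T_lin Tx0 addr0 !ipZl !ipZDr.
  by congr (0 <= complex.Re _); ring.
have /eqP := Re_quadratic_ge0_lin_eq0 quad_ge0.
by rewrite mulf_eq0 (negbTE c_neq0) => /eqP.
Qed.

Lemma accretive_nilpotent_eq0 (c : R[i]) (T : H -> H) k :
  linear T -> c != 0 -> accretive (c \*: T) ->
  (forall x, iter k.+1 T x = 0) -> forall x, T x = 0.
Proof.
case: ip_inner => _ _ _ ip_eq0 T_lin c_neq0 cT_acc.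
elim: k => [//|k IHk] Tk0; apply: IHk => x.
apply: ip_eq0.
exact: (accretive_ker_orthogonal_range T_lin c_neq0 cT_acc (Tk0 x)).
Qed.

End InnerProduct.

Theorem theorem1p1 (R : realType) (H : lmodType R[i]) (ip : H -> H -> R[i])
    (T Ts : H -> H) (n : nat) :
  is_hilbert ip -> bounded_op ip T -> is_adjoint ip T Ts ->
  (2 <= n)%N ->
  (forall x : H, iter n T x = 0) ->
  (positive_op ip (re_part T Ts) \/ positive_op ip (im_part T Ts)) ->
  forall x : H, T x = 0.
Proof.
move=> [ip_inner _] [T_lin _] adj n_ge2 Tn0 A_or_B_ge0.
have [c c_neq0 cT_acc] : exists2 c : R[i], c != 0 & accretive ip (c \*: T).
  case: A_or_B_ge0 => [/(re_part_ge0_accretive ip_inner adj) T_acc|].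
    by exists 1 => [|x]; rewrite ?oner_eq0 //= scale1r.
  exists (- 'i); last exact: im_part_ge0_accretive.
  by rewrite oppr_eq0 eq_complex /= oner_eq0 andbF.
case: n n_ge2 Tn0 => [//|k] _.
exact: (accretive_nilpotent_eq0 ip_inner T_lin c_neq0 cT_acc).
Qed.
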